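(* For every positive integer $n$ there exists a nearly finitary matroid $M$ whose finitarization spectrum $\mathrm{Spec}(M)$ is a finite set with $|\mathrm{Spec}(M)|\ge n$. (That is, there exist nearly finitary matroids with finitarization spectrum of arbitrarily large finite size.)
   Context: A matroid $M=(E,\mathcal{L})$ consists of a (possibly infinite) set $E$ and a family $\mathcal{L}\subseteq 2^E$ of independent sets such that: (I1) $\emptyset\in\mathcal{L}$; (I2) subsets of independent sets are independent; (I3) if $B$ is a maximal element of $\mathcal{L}$ and $A\in\mathcal{L}$ is not maximal, there is $b\in B\setminus A$ with $A\cup\{b\}\in\mathcal{L}$; (I4) if $A\in\mathcal{L}$ and $A\subseteq X\subseteq E$, then $\{S\in\mathcal{L}: A\subseteq S\subseteq X\}$ has a maximal element. Bases are maximal independent sets. The finitarization $M^{\mathrm{fin}}=(E,\mathcal{L}^{\mathrm{fin}})$ has as independent sets all $S\subseteq E$ whose finite subsets all lie in $\mathcal{L}$; it is a matroid. $M$ is nearly finitary if whenever a base $F$ of $M^{\mathrm{fin}}$ contains a base $B$ of $M$, the set $F\setminus B$ is finite. The finitarization spectrum is $\mathrm{Spec}(M)=\{|F\setminus B| : B\subseteq F,\ F \text{ a base of } M^{\mathrm{fin}},\ B \text{ a base of } M\}$, where all infinite cardinalities are identified with a single value $\infty$. *)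

From Stdlib Require Import List.
Import ListNotations.

Definition subset {E : Type} (A B : E -> Prop) : Prop := forall x, A x -> B x.

Definition finite_set {E : Type} (A : E -> Prop) : Prop :=
  exists l : list E, forall x, A x -> In x l.

Definition has_card {E : Type} (A : E -> Prop) (k : nat) : Prop :=
  exists l : list E, NoDup l /\ length l = k /\ (forall x, A x <-> In x l).

Definition maximal_in {E : Type} (L : (E -> Prop) -> Prop) (B : E -> Prop) : Prop :=
  L B /\ forall S, L S -> subset B S -> subset S B.

Definition is_matroid {E : Type} (L : (E -> Prop) -> Prop) : Prop :=
  L (fun _ => False) /\
  (forall A B, L B -> subset A B -> L A) /\
  (forall A B, maximal_in L B -> L A -> ~ maximal_in L A ->
                exists b, B b /\ ~ A b /\ L (fun x => A x \/ x = b)) /\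
  (forall A X, L A -> subset A X ->
                exists S, (L S /\ subset A S /\ subset S X) /\
                  forall S', L S' -> subset A S' -> subset S' X ->
                             subset S S' -> subset S' S).

Definition fin_indep {E : Type} (L : (E -> Prop) -> Prop) (S : E -> Prop) : Prop :=
  forall T, subset T S -> finite_set T -> L T.

Definition setminus {E : Type} (F B : E -> Prop) : E -> Prop := fun x => F x /\ ~ B x.

Definition nearly_finitary {E : Type} (L : (E -> Prop) -> Prop) : Prop :=
  forall F B, maximal_in (fin_indep L) F -> maximal_in L B -> subset B F ->
    finite_set (setminus F B).

(* Spectrum: values in option nat, None standing for the single value "infinity". *)
Definition spec {E : Type} (L : (E -> Prop) -> Prop) (v : option nat) : Prop :=
  exists F B, maximal_in (fin_indep L) F /\ maximal_in L B /\ subset B F /\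
    match v with
    | Some k => has_card (setminus F B) k
    | None => ~ finite_set (setminus F B)
    end.

From Stdlib Require Import List Arith Lia Classical FinFun.
Import ListNotations.

(* The matroid is the direct sum of n copies of a "pinched fan": vertices 0, 1, 2, ... on
   a ray, spines [Spine c k] from k to k+1, and rungs [Rung c i] from i to a root that is
   identified with the end of the ray.  Its circuits are the finite cycles (two rungs and the
   spines between them) and the infinite ones (a rung and the spine ray beyond it); the
   finitarization keeps only the former.  If F contains B, every x in F \ B closes an
   infinite circuit with B, and two such elements in one copy would give F a finite circuit,
   so |F \ B| <= n.  Conversely, all spines in k copies and all rungs in the others form a
   base that becomes a finitary base by adding one rung in each of those k copies, so
   Spec = {0, ..., n}. *)

Lemma least_witness (P : nat -> Prop) :
  (exists k, P k) -> exists g, P g /\ forall k, P k -> g <= k.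
Proof.
  intros Hex.
  destruct (dec_inh_nat_subset_has_unique_least_element P (fun k => classic (P k)) Hex)
    as [g [Hg _]].
  exists g. exact Hg.
Qed.

Lemma first_failure (P : nat -> Prop) p :
  (exists k, p <= k /\ ~ P k) ->
  exists g, p <= g /\ ~ P g /\ forall k, p <= k < g -> P k.
Proof.
  intros Hex. destruct (least_witness _ Hex) as [g [[Hpg Hg] Hmin]].
  exists g. split; [exact Hpg | split; [exact Hg |]].
  intros k Hk. apply NNPP. intro Hnk. specialize (Hmin k (conj (proj1 Hk) Hnk)). lia.
Qed.

Lemma iff_between (P : nat -> Prop) p q :
  (forall k, p <= k < q \/ q <= k < p -> (P k <-> P (S k))) -> (P p <-> P q).
Proof.
  assert (Hup : forall lo d, (forall k, lo <= k < lo + d -> (P k <-> P (S k))) ->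
                             (P lo <-> P (lo + d))).
  { intros lo d. induction d as [|d IH]; intros Hstep.
    - rewrite Nat.add_0_r. reflexivity.
    - rewrite Nat.add_succ_r, <- (Hstep (lo + d)) by lia.
      apply IH. intros k Hk. apply Hstep. lia. }
  intros Hstep. destruct (le_ge_dec p q).
  - replace q with (p + (q - p)) by lia. apply Hup. intros k Hk. apply Hstep. lia.
  - replace p with (q + (p - q)) by lia. symmetry. apply Hup. intros k Hk. apply Hstep. lia.
Qed.

Lemma list_bounded {E : Type} (f : E -> nat) (l : list E) :
  exists N, forall x, In x l -> f x < N.
Proof.
  induction l as [|a l [N HN]].
  - exists 0. intros x [].
  - exists (Nat.max (S (f a)) N). intros x [<-|Hx]; [lia | specialize (HN x Hx); lia].
Qed.

Lemma listed_of_injective_bounded {E : Type} (D : E -> Prop) (f : E -> nat) n :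
  (forall x, D x -> f x < n) -> (forall x y, D x -> D y -> f x = f y -> x = y) ->
  exists l, length l <= n /\ forall x, D x -> In x l.
Proof.
  intros Hbound Hinj.
  assert (Hm : forall m, exists l, length l <= m /\ forall x, D x -> f x < m -> In x l).
  { induction m as [|m [l [Hlen Hl]]].
    - exists []. split; [reflexivity | intros x _ Hx; lia].
    - destruct (classic (exists x, D x /\ f x = m)) as [[x [Hx Hfx]] | Hnone].
      + exists (x :: l). split; [simpl; lia |].
        intros y Hy Hfy. destruct (Nat.eq_dec (f y) m) as [Heq|Hne].
        * left. apply Hinj; congruence.
        * right. apply Hl; [exact Hy | lia].
      + exists l. split; [lia |].
        intros y Hy Hfy. destruct (Nat.eq_dec (f y) m) as [Heq|Hne].
        * exfalso. apply Hnone. exists y. split; assumption.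
        * apply Hl; [exact Hy | lia]. }
  destruct (Hm n) as [l [Hlen Hl]]. exists l. split; [exact Hlen |].
  intros x Hx. apply Hl; [exact Hx | apply Hbound, Hx].
Qed.

Definition add {E : Type} (Y : E -> Prop) (x : E) : E -> Prop := fun y => Y y \/ y = x.

Section MaximalSets.
Variable E : Type.
Variable L : (E -> Prop) -> Prop.
Hypothesis L_down : forall Y Z, L Z -> subset Y Z -> L Y.

Lemma maximal_within (S X : E -> Prop) :
  (forall x, X x -> ~ S x -> ~ L (add S x)) ->
  forall S', L S' -> subset S' X -> subset S S' -> subset S' S.
Proof.
  intros Hdep S' HS' HS'X HSS' x Hx. apply NNPP. intro Hnx.
  apply (Hdep x (HS'X x Hx) Hnx), (L_down _ S' HS').
  intros y [Hy | ->]; [apply HSS', Hy | exact Hx].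
Qed.

Lemma not_maximal_add (A : E -> Prop) :
  L A -> ~ maximal_in L A -> exists a, ~ A a /\ L (add A a).
Proof.
  intros HA HnA. apply NNPP. intro Hno. apply HnA. split; [exact HA |].
  intros S HS HAS. apply (maximal_within A (fun _ => True)); [| exact HS | easy | exact HAS].
  intros x _ Hx HAx. apply Hno. exists x. split; assumption.
Qed.

End MaximalSets.

Lemma maximal_add_dep {E : Type} (L : (E -> Prop) -> Prop) B x :
  maximal_in L B -> ~ B x -> ~ L (add B x).
Proof.
  intros [_ HB] Hx HL. apply Hx, (HB _ HL); [intros y Hy; left; exact Hy | right; reflexivity].
Qed.

Inductive fan_elt : Type :=
| Rung (c i : nat)
| Spine (c k : nat).

Definition copy (x : fan_elt) : nat := match x with Rung c _ | Spine c _ => c end.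

Definition position (x : fan_elt) : nat := match x with Rung _ i | Spine _ i => i end.

Definition in_copies (n : nat) (Y : fan_elt -> Prop) : Prop := forall x, Y x -> copy x < n.

Definition no_finite_circuit (Y : fan_elt -> Prop) : Prop :=
  forall c i j, i < j -> Y (Rung c i) -> Y (Rung c j) ->
    exists k, i <= k < j /\ ~ Y (Spine c k).

Definition no_infinite_circuit (Y : fan_elt -> Prop) : Prop :=
  forall c i, Y (Rung c i) -> exists k, i <= k /\ ~ Y (Spine c k).

Definition fan_indep (n : nat) (Y : fan_elt -> Prop) : Prop :=
  in_copies n Y /\ no_finite_circuit Y /\ no_infinite_circuit Y.

Lemma fan_indep_sub n Y Z : fan_indep n Z -> subset Y Z -> fan_indep n Y.
Proof.
  intros [Hcop [Hfin Hinf]] HYZ. split; [| split].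
  - intros x Hx. apply Hcop, HYZ, Hx.
  - intros c i j Hij Hi Hj. destruct (Hfin c i j Hij (HYZ _ Hi) (HYZ _ Hj)) as [k [Hk Hn]].
    exists k. split; [exact Hk | intro H; apply Hn, HYZ, H].
  - intros c i Hi. destruct (Hinf c i (HYZ _ Hi)) as [k [Hk Hn]].
    exists k. split; [exact Hk | intro H; apply Hn, HYZ, H].
Qed.

Definition spine_path (Y : fan_elt -> Prop) (c p q : nat) : Prop :=
  forall k, p <= k < q \/ q <= k < p -> Y (Spine c k).

(* Vertex [q] of copy [c] is joined to the root through a rung, or to the end of the ray,
   which is identified with the root. *)
Definition rooted (Y : fan_elt -> Prop) (c q : nat) : Prop :=
  (exists p, Y (Rung c p) /\ spine_path Y c p q) \/ (forall k, q <= k -> Y (Spine c k)).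

Lemma spine_path_sym Y c p q : spine_path Y c p q -> spine_path Y c q p.
Proof. intros H k Hk. apply H. lia. Qed.

Lemma spine_path_trans Y c p q r :
  spine_path Y c p q -> spine_path Y c q r -> spine_path Y c p r.
Proof.
  intros Hpq Hqr k Hk.
  destruct (le_lt_dec q k), (le_lt_dec p k); [apply Hqr | apply Hpq | apply Hpq | apply Hqr]; lia.
Qed.

Lemma spine_path_one Y c k : Y (Spine c k) -> spine_path Y c k (S k).
Proof. intros H m Hm. replace m with k by lia. exact H. Qed.

Lemma spine_path_mono Y Z c p q : subset Y Z -> spine_path Y c p q -> spine_path Z c p q.
Proof. intros HYZ H k Hk. apply HYZ, H, Hk. Qed.

Lemma not_spine_path Y c p q :
  ~ spine_path Y c p q -> exists k, (p <= k < q \/ q <= k < p) /\ ~ Y (Spine c k).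
Proof.
  intros H. apply NNPP. intro Hno. apply H. intros k Hk. apply NNPP. intro Hk'.
  apply Hno. exists k. split; assumption.
Qed.

Lemma not_spine_ray Y c q :
  ~ (forall k, q <= k -> Y (Spine c k)) -> exists k, q <= k /\ ~ Y (Spine c k).
Proof.
  intros H. apply NNPP. intro Hno. apply H. intros k Hk. apply NNPP. intro Hk'.
  apply Hno. exists k. split; assumption.
Qed.

Lemma rooted_mono Y Z c q : subset Y Z -> rooted Y c q -> rooted Z c q.
Proof.
  intros HYZ [[p [Hp Hpath]] | Hray].
  - left. exists p. split; [apply HYZ, Hp | exact (spine_path_mono _ _ _ _ _ HYZ Hpath)].
  - right. intros k Hk. apply HYZ, Hray, Hk.
Qed.

Lemma rooted_along Y c p q : spine_path Y c p q -> rooted Y c q -> rooted Y c p.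
Proof.
  intros Hpq [[r [Hr Hpath]] | Hray].
  - left. exists r. split; [exact Hr |].
    apply (spine_path_trans _ _ _ q); [exact Hpath | apply spine_path_sym, Hpq].
  - right. intros k Hk. destruct (le_lt_dec q k); [apply Hray; lia | apply Hpq; lia].
Qed.

Lemma rooted_rung Y c q : Y (Rung c q) -> rooted Y c q.
Proof. intros H. left. exists q. split; [exact H | intros k Hk; lia]. Qed.

Lemma rooted_succ_iff Y c k : Y (Spine c k) -> (rooted Y c k <-> rooted Y c (S k)).
Proof.
  intros H. pose proof (spine_path_one _ _ _ H) as Hpath.
  split; apply rooted_along; [apply spine_path_sym |]; exact Hpath.
Qed.

Lemma rooted_left Y c k : rooted Y c k -> ~ Y (Spine c k) ->
  exists p, p <= k /\ Y (Rung c p) /\ spine_path Y c p k.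
Proof.
  intros [[p [Hp Hpath]] | Hray] Hk.
  - exists p. split; [| split; assumption].
    destruct (le_lt_dec p k); [assumption | exfalso; apply Hk, Hpath; lia].
  - exfalso. apply Hk, Hray. lia.
Qed.

Lemma rooted_right Y c k : rooted Y c (S k) -> ~ Y (Spine c k) ->
  (exists q, S k <= q /\ Y (Rung c q) /\ spine_path Y c (S k) q) \/
  (forall j, S k <= j -> Y (Spine c j)).
Proof.
  intros [[q [Hq Hpath]] | Hray] Hk; [left | right; exact Hray].
  exists q. split; [| split; [exact Hq | apply spine_path_sym, Hpath]].
  destruct (le_lt_dec (S k) q); [assumption | exfalso; apply Hk, Hpath; lia].
Qed.

Lemma rungs_joined_eq Y c p q :
  no_finite_circuit Y -> Y (Rung c p) -> Y (Rung c q) -> spine_path Y c p q -> p = q.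
Proof.
  intros Hfin Hp Hq Hpath. destruct (lt_eq_lt_dec p q) as [[Hlt | Heq] | Hlt]; [| exact Heq |].
  - destruct (Hfin c p q Hlt Hp Hq) as [k [Hk Hn]]. exfalso. apply Hn, Hpath. lia.
  - destruct (Hfin c q p Hlt Hq Hp) as [k [Hk Hn]]. exfalso. apply Hn, Hpath. lia.
Qed.

Lemma rung_no_ray Y c p :
  no_infinite_circuit Y -> Y (Rung c p) -> ~ (forall k, p <= k -> Y (Spine c k)).
Proof. intros Hinf Hp Hray. destruct (Hinf c p Hp) as [k [Hk Hn]]. apply Hn, Hray, Hk. Qed.

Lemma fan_indep_add_rung n Y c q : fan_indep n Y -> c < n -> ~ Y (Rung c q) ->
  (fan_indep n (add Y (Rung c q)) <-> ~ rooted Y c q).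
Proof.
  intros [Hcop [Hfin Hinf]] Hc Hq. split.
  - intros [_ [Hfin' Hinf']] [[p [Hp Hpath]] | Hray].
    + assert (p = q) as ->; [| exact (Hq Hp)].
      apply (rungs_joined_eq _ c p q Hfin' (or_introl Hp) (or_intror eq_refl)).
      apply (spine_path_mono Y); [intros y Hy; left; exact Hy | exact Hpath].
    + apply (rung_no_ray _ c q Hinf' (or_intror eq_refl)).
      intros k Hk. left. apply Hray, Hk.
  - intros Hnr. split; [| split].
    + intros x [Hx | ->]; [apply Hcop, Hx | exact Hc].
    + intros c' i j Hij [Hi | Hi] [Hj | Hj].
      * destruct (Hfin c' i j Hij Hi Hj) as [k [Hk Hn]].
        exists k. split; [exact Hk | intros [H | H]; [exact (Hn H) | discriminate]].
      * injection Hj as -> ->.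
        assert (Hnp : ~ spine_path Y c i q)
          by (intro Hp; apply Hnr; left; exists i; split; assumption).
        destruct (not_spine_path _ _ _ _ Hnp) as [k [Hk Hn]].
        exists k. split; [lia | intros [H | H]; [exact (Hn H) | discriminate]].
      * injection Hi as -> ->.
        assert (Hnp : ~ spine_path Y c j q)
          by (intro Hp; apply Hnr; left; exists j; split; assumption).
        destruct (not_spine_path _ _ _ _ Hnp) as [k [Hk Hn]].
        exists k. split; [lia | intros [H | H]; [exact (Hn H) | discriminate]].
      * injection Hi as -> ->. injection Hj as ->. lia.
    + intros c' i [Hi | Hi].
      * destruct (Hinf c' i Hi) as [k [Hk Hn]].
        exists k. split; [exact Hk | intros [H | H]; [exact (Hn H) | discriminate]].
      * injection Hi as -> ->.
        assert (Hnray : ~ forall k, q <= k -> Y (Spine c k))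
          by (intro; apply Hnr; right; assumption).
        destruct (not_spine_ray _ _ _ Hnray) as [k [Hk Hn]].
        exists k. split; [exact Hk | intros [H | H]; [exact (Hn H) | discriminate]].
Qed.

Lemma rooted_ends_add_spine_dep n Y c k :
  ~ Y (Spine c k) -> rooted Y c k -> rooted Y c (S k) -> ~ fan_indep n (add Y (Spine c k)).
Proof.
  intros Hk Hl Hr [_ [Hfin' Hinf']].
  assert (HY : subset Y (add Y (Spine c k))) by (intros y Hy; left; exact Hy).
  destruct (rooted_left _ _ _ Hl Hk) as [p [Hpk [Hp Hpath]]].
  destruct (rooted_right _ _ _ Hr Hk) as [[q [Hkq [Hq Hpath']]] | Hray].
  - enough (p = q) by lia.
    apply (rungs_joined_eq _ c p q Hfin' (HY _ Hp) (HY _ Hq)).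
    apply (spine_path_trans _ _ _ k); [exact (spine_path_mono _ _ _ _ _ HY Hpath) |].
    apply (spine_path_trans _ _ _ (S k)); [apply spine_path_one; right; reflexivity |].
    exact (spine_path_mono _ _ _ _ _ HY Hpath').
  - apply (rung_no_ray _ c p Hinf' (HY _ Hp)). intros j Hj.
    destruct (lt_eq_lt_dec j k) as [[Hjk | ->] | Hkj].
    + left. apply Hpath. lia.
    + right. reflexivity.
    + left. apply Hray. lia.
Qed.

(* Spine [k] can only close a cycle through the root, since removing it disconnects the ray. *)
Lemma fan_indep_add_spine n Y c k : fan_indep n Y -> c < n -> ~ Y (Spine c k) ->
  (fan_indep n (add Y (Spine c k)) <-> ~ (rooted Y c k /\ rooted Y c (S k))).
Proof.
  intros [Hcop [Hfin Hinf]] Hc Hk. split.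
  - intros Hind [Hl Hr]. exact (rooted_ends_add_spine_dep n Y c k Hk Hl Hr Hind).
  - intros Hnr. split; [| split].
    + intros x [Hx | ->]; [apply Hcop, Hx | exact Hc].
    + intros c' i j Hij [Hi | Hi] [Hj | Hj]; try discriminate.
      apply NNPP. intro Hno.
      assert (Hall : spine_path (add Y (Spine c k)) c' i j).
      { intros m Hm. apply NNPP. intro Hm'. apply Hno. exists m. split; [lia | exact Hm']. }
      destruct (Hfin c' i j Hij Hi Hj) as [g [Hg Hn]].
      destruct (Hall g (or_introl Hg)) as [H | H]; [contradiction | injection H as -> ->].
      apply Hnr. split.
      * left. exists i. split; [exact Hi |]. intros m Hm.
        destruct (Hall m ltac:(lia)) as [H | H]; [exact H | injection H; lia].
      * left. exists j. split; [exact Hj |]. intros m Hm.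
        destruct (Hall m ltac:(lia)) as [H | H]; [exact H | injection H; lia].
    + intros c' i [Hi | Hi]; [| discriminate].
      apply NNPP. intro Hno.
      assert (Hall : forall m, i <= m -> add Y (Spine c k) (Spine c' m)).
      { intros m Hm. apply NNPP. intro Hm'. apply Hno. exists m. split; assumption. }
      destruct (Hinf c' i Hi) as [g [Hg Hn]].
      destruct (Hall g Hg) as [H | H]; [contradiction | injection H as -> ->].
      apply Hnr. split.
      * left. exists i. split; [exact Hi |]. intros m Hm.
        destruct (Hall m ltac:(lia)) as [H | H]; [exact H | injection H; lia].
      * right. intros m Hm.
        destruct (Hall m ltac:(lia)) as [H | H]; [exact H | injection H; lia].
Qed.

Lemma maximal_rooted n B c j : maximal_in (fan_indep n) B -> c < n -> rooted B c j.
Proof.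
  intros HB Hc. apply NNPP. intro Hj.
  assert (Hr : ~ B (Rung c j)) by (intro H; apply Hj, rooted_rung, H).
  apply (maximal_add_dep _ _ _ HB Hr).
  apply fan_indep_add_rung; [exact (proj1 HB) | exact Hc | exact Hr | exact Hj].
Qed.

(* If no element of [B] can be added to [A], then [A] spans [B], so it roots every vertex
   that [B] roots. *)
Lemma rooted_transfer n A B c : fan_indep n A -> c < n ->
  (forall b, B b -> ~ A b -> ~ fan_indep n (add A b)) ->
  (forall j, rooted B c j) -> forall j, rooted A c j.
Proof.
  intros HA Hc Hdep HB j.
  assert (Hboth : forall k, B (Spine c k) -> ~ A (Spine c k) ->
                            rooted A c k /\ rooted A c (S k)).
  { intros k Hk Hnk. apply NNPP. intro H.
    apply (Hdep _ Hk Hnk), fan_indep_add_spine; assumption. }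
  assert (Hstep : forall k, B (Spine c k) -> (rooted A c k <-> rooted A c (S k))).
  { intros k Hk. destruct (classic (A (Spine c k))) as [HAk | HAk].
    - apply rooted_succ_iff, HAk.
    - destruct (Hboth k Hk HAk). tauto. }
  destruct (HB j) as [[p [Hp Hpath]] | Hray].
  - apply (iff_between (rooted A c) j p); [intros k Hk; apply Hstep, Hpath; lia |].
    destruct (classic (A (Rung c p))) as [HAp | HAp]; [apply rooted_rung, HAp |].
    apply NNPP. intro H. apply (Hdep _ Hp HAp), fan_indep_add_rung; assumption.
  - destruct (classic (forall k, j <= k -> A (Spine c k))) as [HAray | HAray];
      [right; exact HAray |].
    destruct (not_spine_ray _ _ _ HAray) as [k [Hjk Hk]].
    apply (iff_between (rooted A c) j k); [intros m Hm; apply Hstep, Hray; lia |].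
    apply (Hboth k (Hray k Hjk) Hk).
Qed.

Lemma fan_exchange n A B :
  maximal_in (fan_indep n) B -> fan_indep n A -> ~ maximal_in (fan_indep n) A ->
  exists b, B b /\ ~ A b /\ fan_indep n (add A b).
Proof.
  intros HB HA HnA.
  destruct (not_maximal_add _ _ (fan_indep_sub n) A HA HnA) as [a [Ha HAa]].
  apply NNPP. intro Hno.
  assert (Hdep : forall b, B b -> ~ A b -> ~ fan_indep n (add A b))
    by (intros b Hb Hnb HAb; apply Hno; exists b; auto).
  assert (Hc : copy a < n) by (apply (proj1 HAa); right; reflexivity).
  pose proof (rooted_transfer n A B _ HA Hc Hdep (fun j => maximal_rooted n B _ j HB Hc)) as Hroot.
  destruct a as [c i | c k]; simpl in Hc, Hroot.
  - apply (fan_indep_add_rung n A c i HA Hc Ha) in HAa. exact (HAa (Hroot i)).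
  - apply (fan_indep_add_spine n A c k HA Hc Ha) in HAa. exact (HAa (conj (Hroot k) (Hroot (S k)))).
Qed.

(* A maximal independent set between [A] and [X], built in two rounds.  First add every
   [X]-spine leaving an [A]-unrooted vertex, and an [X]-spine leaving a rooted vertex only
   when it leads into a dead end, so that no ray is attached to a rung.  Then add, on every
   still unrooted spine segment, its leftmost [X]-rung. *)
Section MaximalExtension.
Variable n : nat.
Variables A X : fan_elt -> Prop.
Hypothesis HA : fan_indep n A.
Hypothesis HAX : subset A X.

Definition dead_end (c v : nat) : Prop :=
  exists m, v <= m /\ ~ X (Spine c m) /\
    forall j, v <= j <= m -> ~ rooted A c j /\ (j < m -> X (Spine c j)).

Definition spine_extension : fan_elt -> Prop := fun x => A x \/
  match x with
  | Spine c k => c < n /\ X (Spine c k) /\ (~ rooted A c k \/ dead_end c (S k))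
  | Rung _ _ => False
  end.

Definition rung_extension : fan_elt -> Prop := fun x => spine_extension x \/
  match x with
  | Rung c q => c < n /\ X (Rung c q) /\ ~ rooted spine_extension c q /\
      (forall q', q' < q -> spine_path spine_extension c q' q -> ~ X (Rung c q'))
  | Spine _ _ => False
  end.

Lemma A_sub_spine_extension : subset A spine_extension.
Proof. intros x Hx. left. exact Hx. Qed.

Lemma spine_extension_sub_rung_extension : subset spine_extension rung_extension.
Proof. intros x Hx. left. exact Hx. Qed.

Lemma spine_extension_sub_X : subset spine_extension X.
Proof.
  intros [c i | c k] [Hx | Hx]; [apply HAX, Hx | contradiction | apply HAX, Hx | apply Hx].
Qed.

Lemma rung_extension_sub_X : subset rung_extension X.
Proof.
  intros [c i | c k] [Hx | Hx];
    [apply spine_extension_sub_X, Hx | apply Hx | apply spine_extension_sub_X, Hx | contradiction].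
Qed.

Lemma spine_extension_rung c i : spine_extension (Rung c i) -> A (Rung c i).
Proof. intros [H | H]; [exact H | contradiction]. Qed.

Lemma rung_extension_spine c k : rung_extension (Spine c k) -> spine_extension (Spine c k).
Proof. intros [H | H]; [exact H | contradiction]. Qed.

(* Spine [g] leaves a rooted vertex, so it enters [spine_extension] only towards a dead end,
   whose final gap then serves as [m]. *)
Lemma spine_extension_gap c p g :
  A (Rung c p) -> p <= g -> ~ A (Spine c g) -> (forall k, p <= k < g -> A (Spine c k)) ->
  exists m, g <= m /\ ~ spine_extension (Spine c m) /\
    forall q, g < q -> A (Rung c q) -> m < q.
Proof.
  intros Hp Hpg Hg Hpath.
  assert (Hroot : rooted A c g)
    by (left; exists p; split; [exact Hp | intros k Hk; apply Hpath; lia]).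
  destruct (classic (dead_end c (S g))) as [[m [Hgm [Hm Hseg]]] | Hnd].
  - exists m. split; [lia | split].
    + intro H. apply Hm, spine_extension_sub_X, H.
    + intros q Hgq Hq. destruct (le_lt_dec q m) as [Hqm | Hmq]; [| exact Hmq].
      exfalso. apply (proj1 (Hseg q ltac:(lia))), rooted_rung, Hq.
  - exists g. split; [lia | split; [| intros; lia]].
    intros [H | [_ [_ [H | H]]]]; contradiction.
Qed.

Lemma spine_extension_indep : fan_indep n spine_extension.
Proof.
  destruct HA as [Hcop [Hfin Hinf]]. split; [| split].
  - intros [c i | c k] [Hx | Hx]; [apply Hcop, Hx | contradiction | apply Hcop, Hx | apply Hx].
  - intros c i j Hij Hi Hj. apply spine_extension_rung in Hi, Hj.
    destruct (Hfin c i j Hij Hi Hj) as [k [Hk Hn]].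
    destruct (first_failure (fun k => A (Spine c k)) i ltac:(exists k; split; [lia | exact Hn]))
      as [g [Hig [Hg Hpath]]].
    assert (g <= k) by (destruct (le_lt_dec g k); [assumption | exfalso; apply Hn, Hpath; lia]).
    destruct (spine_extension_gap c i g Hi Hig Hg Hpath) as [m [Hgm [Hm Hbefore]]].
    exists m. split; [split; [lia | apply Hbefore; [lia | exact Hj]] | exact Hm].
  - intros c i Hi. apply spine_extension_rung in Hi.
    destruct (first_failure (fun k => A (Spine c k)) i (Hinf c i Hi)) as [g [Hig [Hg Hpath]]].
    destruct (spine_extension_gap c i g Hi Hig Hg Hpath) as [m [Hgm [Hm _]]].
    exists m. split; [lia | exact Hm].
Qed.

Lemma rung_extension_indep : fan_indep n rung_extension.
Proof.
  destruct spine_extension_indep as [Hcop [Hfin Hinf]]. split; [| split].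
  - intros [c i | c k] [Hx | Hx]; [apply Hcop, Hx | apply Hx | apply Hcop, Hx | contradiction].
  - intros c i j Hij Hi Hj.
    assert (Hnp : ~ spine_path spine_extension c i j).
    { destruct Hi as [Hi | [_ [HXi [Hri _]]]]; destruct Hj as [Hj | [_ [_ [Hrj Hleft]]]];
        intro Hpath.
      - apply (rungs_joined_eq _ c i j Hfin Hi Hj) in Hpath. lia.
      - apply Hrj. left. exists i. split; assumption.
      - apply Hri. left. exists j. split; [exact Hj | apply spine_path_sym, Hpath].
      - exact (Hleft i Hij Hpath HXi). }
    destruct (not_spine_path _ _ _ _ Hnp) as [k [Hk Hn]].
    exists k. split; [lia | intro H; apply Hn, rung_extension_spine, H].
  - intros c i [Hi | [_ [_ [Hri _]]]].
    + destruct (Hinf c i Hi) as [k [Hk Hn]].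
      exists k. split; [exact Hk | intro H; apply Hn, rung_extension_spine, H].
    + assert (Hnray : ~ forall k, i <= k -> rung_extension (Spine c k)).
      { intro Hray. apply Hri. right. intros k Hk. apply rung_extension_spine, Hray, Hk. }
      exact (not_spine_ray _ _ _ Hnray).
Qed.

Lemma rung_extension_rooted_rung c q :
  c < n -> X (Rung c q) -> ~ rung_extension (Rung c q) -> rooted rung_extension c q.
Proof.
  intros Hc HXq Hq.
  destruct (classic (rooted spine_extension c q)) as [Hr | Hr];
    [exact (rooted_mono _ _ _ _ spine_extension_sub_rung_extension Hr) |].
  assert (Hex : exists q', q' < q /\ spine_path spine_extension c q' q /\ X (Rung c q')).
  { apply NNPP. intro Hno. apply Hq. right. repeat split; [exact Hc | exact HXq | exact Hr |].
    intros q' Hq' Hpath HX'. apply Hno. exists q'. repeat split; assumption. }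
  destruct (least_witness _ Hex) as [q0 [[Hq0 [Hpath0 HX0]] Hmin]].
  left. exists q0. split.
  - right. repeat split; [exact Hc | exact HX0 | |].
    + intro Hr0. apply Hr, (rooted_along _ _ _ q0); [apply spine_path_sym, Hpath0 | exact Hr0].
    + intros q' Hq' Hpath HX'.
      assert (Hlt : q' < q) by lia.
      specialize (Hmin q' (conj Hlt (conj (spine_path_trans _ _ _ _ _ Hpath Hpath0) HX'))).
      lia.
  - exact (spine_path_mono _ _ _ _ _ spine_extension_sub_rung_extension Hpath0).
Qed.

Lemma rung_extension_rooted_spine c k :
  c < n -> X (Spine c k) -> ~ rung_extension (Spine c k) ->
  rooted rung_extension c k /\ rooted rung_extension c (S k).
Proof.
  intros Hc HXk Hk.
  assert (HAsub : subset A rung_extension)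
    by (intros x Hx; apply spine_extension_sub_rung_extension, A_sub_spine_extension, Hx).
  assert (Hrk : rooted A c k)
    by (apply NNPP; intro H; apply Hk; left; right;
        repeat split; [exact Hc | exact HXk | left; exact H]).
  assert (Hnd : ~ dead_end c (S k))
    by (intro H; apply Hk; left; right; repeat split; [exact Hc | exact HXk | right; exact H]).
  split; [exact (rooted_mono _ _ _ _ HAsub Hrk) |].
  assert (Hunrooted : forall j, ~ rooted A c j -> X (Spine c j) -> rung_extension (Spine c j))
    by (intros j Hj HXj; left; right; repeat split; [exact Hc | exact HXj | left; exact Hj]).
  destruct (classic (exists j, S k <= j /\ (rooted A c j \/ ~ X (Spine c j))))
    as [Hex | Hnone].
  - destruct (least_witness _ Hex) as [j0 [[Hkj0 Hj0] Hmin]].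
    assert (Hbelow : forall j, S k <= j < j0 -> ~ rooted A c j /\ X (Spine c j)).
    { intros j Hj. split.
      - intro H. specialize (Hmin j (conj (proj1 Hj) (or_introl H))). lia.
      - apply NNPP. intro H. specialize (Hmin j (conj (proj1 Hj) (or_intror H))). lia. }
    assert (Hpath : spine_path rung_extension c (S k) j0)
      by (intros j Hj; apply Hunrooted; apply Hbelow; lia).
    destruct (classic (rooted A c j0)) as [Hr0 | Hr0].
    + exact (rooted_along _ _ _ _ Hpath (rooted_mono _ _ _ _ HAsub Hr0)).
    + exfalso. apply Hnd. exists j0. split; [exact Hkj0 | split].
      * destruct Hj0; [contradiction | assumption].
      * intros j Hj. destruct (Nat.eq_dec j j0) as [-> | Hne]; [split; [exact Hr0 | lia] |].
        destruct (Hbelow j ltac:(lia)). split; [assumption | intros _; assumption].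
  - right. intros j Hj. apply Hunrooted.
    + intro H. apply Hnone. exists j. split; [exact Hj | left; exact H].
    + apply NNPP. intro H. apply Hnone. exists j. split; [exact Hj | right; exact H].
Qed.

Lemma rung_extension_maximal x : X x -> ~ rung_extension x -> ~ fan_indep n (add rung_extension x).
Proof.
  intros HXx Hx Hind.
  assert (Hc : copy x < n) by (apply (proj1 Hind); right; reflexivity).
  destruct x as [c q | c k]; simpl in Hc.
  - apply (fan_indep_add_rung n _ c q rung_extension_indep Hc Hx) in Hind.
    exact (Hind (rung_extension_rooted_rung c q Hc HXx Hx)).
  - apply (fan_indep_add_spine n _ c k rung_extension_indep Hc Hx) in Hind.
    exact (Hind (rung_extension_rooted_spine c k Hc HXx Hx)).
Qed.

End MaximalExtension.

Lemma fan_matroid n : is_matroid (fan_indep n).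
Proof.
  split; [| split; [| split]].
  - split; [| split]; [intros x [] | intros c i j _ [] | intros c i []].
  - exact (fan_indep_sub n).
  - exact (fan_exchange n).
  - intros A X HA HAX. exists (rung_extension n A X).
    split; [split; [| split] |].
    + exact (rung_extension_indep n A X HA HAX).
    + intros x Hx. apply spine_extension_sub_rung_extension, A_sub_spine_extension, Hx.
    + exact (rung_extension_sub_X n A X HAX).
    + intros S' HS' _ HS'X.
      apply (maximal_within _ _ (fan_indep_sub n) _ X); [| exact HS' | exact HS'X].
      exact (rung_extension_maximal n A X HA HAX).
Qed.

Lemma fin_indep_fan n F : fin_indep (fan_indep n) F <-> in_copies n F /\ no_finite_circuit F.
Proof.
  split.
  - intros HF. split.
    + intros x Hx.
      assert (Hsing : fan_indep n (fun y => y = x)).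
      { apply HF; [intros y ->; exact Hx | exists [x]; intros y ->; left; reflexivity]. }
      apply (proj1 Hsing). reflexivity.
    + intros c i j Hij Hi Hj.
      set (T := fun y => F y /\ (y = Rung c i \/ y = Rung c j \/
                                 exists k, i <= k < j /\ y = Spine c k)).
      assert (HT : fan_indep n T).
      { apply HF; [intros y [Hy _]; exact Hy |].
        exists (Rung c i :: Rung c j :: map (Spine c) (seq i (j - i))).
        intros y [_ [-> | [-> | [k [Hk ->]]]]]; [left; reflexivity | right; left; reflexivity |].
        right; right. apply in_map_iff. exists k. split; [reflexivity | apply in_seq; lia]. }
      destruct (proj1 (proj2 HT) c i j Hij) as [k [Hk Hn]];
        [split; [exact Hi | left; reflexivity] | split; [exact Hj | right; left; reflexivity] |].
      exists k. split; [exact Hk |]. intro H. apply Hn. split; [exact H | right; right; eauto].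
  - intros [Hcop Hfin] T HTF [l Hl]. split; [| split].
    + intros x Hx. apply Hcop, HTF, Hx.
    + intros c i j Hij Hi Hj. destruct (Hfin c i j Hij (HTF _ Hi) (HTF _ Hj)) as [k [Hk Hn]].
      exists k. split; [exact Hk | intro H; apply Hn, HTF, H].
    + intros c i _. destruct (list_bounded position l) as [N HN].
      exists (N + i). split; [lia |]. intro H. specialize (HN _ (Hl _ H)). simpl in HN. lia.
Qed.

Section Spectrum.
Variable n : nat.
Variables F B : fan_elt -> Prop.
Hypothesis HF : maximal_in (fin_indep (fan_indep n)) F.
Hypothesis HB : maximal_in (fan_indep n) B.
Hypothesis HBF : subset B F.

Lemma add_base_sub_fin_base x : F x -> subset (add B x) F.
Proof. intros Hx y [Hy | ->]; [apply HBF, Hy | exact Hx]. Qed.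

(* [add B x] is dependent but lies in the finitarily independent [F], so it contains an
   infinite circuit, which must pass through [x]. *)
Lemma extra_element_closes_ray x : F x -> ~ B x ->
  exists c i, add B x (Rung c i) /\ (forall k, i <= k -> add B x (Spine c k)) /\
    (x = Rung c i \/ exists k, i <= k /\ x = Spine c k).
Proof.
  intros Hx Hnx.
  destruct (proj1 (fin_indep_fan n F) (proj1 HF)) as [Hcop Hfin].
  pose proof (add_base_sub_fin_base x Hx) as Hsub.
  assert (Hray : ~ no_infinite_circuit (add B x)).
  { intro Hinf. apply (maximal_add_dep _ _ _ HB Hnx). split; [| split; [| exact Hinf]].
    - intros y Hy. apply Hcop, Hsub, Hy.
    - intros c i j Hij Hi Hj. destruct (Hfin c i j Hij (Hsub _ Hi) (Hsub _ Hj)) as [k [Hk Hn]].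
      exists k. split; [exact Hk | intro H; apply Hn, Hsub, H]. }
  assert (Hex : exists c i, add B x (Rung c i) /\ forall k, i <= k -> add B x (Spine c k)).
  { apply NNPP. intro Hno. apply Hray. intros c i Hi. apply not_spine_ray.
    intro Hall. apply Hno. exists c, i. split; assumption. }
  destruct Hex as [c [i [Hi Hall]]]. exists c, i. split; [exact Hi | split; [exact Hall |]].
  apply NNPP. intro Hno. apply (rung_no_ray B c i (proj2 (proj2 (proj1 HB)))).
  - destruct Hi as [Hi | <-]; [exact Hi | exfalso; apply Hno; left; reflexivity].
  - intros k Hk. destruct (Hall k Hk) as [H | <-]; [exact H |].
    exfalso. apply Hno. right. exists k. split; [exact Hk | reflexivity].
Qed.

(* Two infinite circuits in the same copy would put two rungs joined by spines into [F]. *)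
Lemma extra_elements_copy_inj x y : F x -> ~ B x -> F y -> ~ B y -> copy x = copy y -> x = y.
Proof.
  intros Hx Hnx Hy Hny Hcopy.
  destruct (proj1 (fin_indep_fan n F) (proj1 HF)) as [_ Hfin].
  pose proof (add_base_sub_fin_base x Hx) as Hsubx.
  pose proof (add_base_sub_fin_base y Hy) as Hsuby.
  destruct (extra_element_closes_ray x Hx Hnx) as [c [i [Hi [Hrayx Hshx]]]].
  destruct (extra_element_closes_ray y Hy Hny) as [c' [j [Hj [Hrayy Hshy]]]].
  assert (c' = c) as ->.
  { destruct Hshx as [-> | [? [_ ->]]]; destruct Hshy as [-> | [? [_ ->]]]; exact (eq_sym Hcopy). }
  assert (i = j) as <-.
  { apply (rungs_joined_eq F c i j Hfin (Hsubx _ Hi) (Hsuby _ Hj)).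
    intros k Hk. destruct (le_lt_dec i j).
    - apply Hsubx, Hrayx. lia.
    - apply Hsuby, Hrayy. lia. }
  assert (Hyx : add B x y).
  { destruct Hshy as [-> | [k [Hk ->]]]; [exact Hi | apply Hrayx, Hk]. }
  destruct Hyx as [H | H]; [contradiction | exact (eq_sym H)].
Qed.

Lemma extra_elements_listed :
  exists l, length l <= n /\ forall x, setminus F B x -> In x l.
Proof.
  destruct (proj1 (fin_indep_fan n F) (proj1 HF)) as [Hcop _].
  apply (listed_of_injective_bounded _ copy).
  - intros x [Hx _]. apply Hcop, Hx.
  - intros x y [Hx Hnx] [Hy Hny]. apply extra_elements_copy_inj; assumption.
Qed.

End Spectrum.

Lemma fan_nearly_finitary n : nearly_finitary (fan_indep n).
Proof.
  intros F B HF HB HBF. destruct (extra_elements_listed n F B HF HB HBF) as [l [_ Hl]].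
  exists l. exact Hl.
Qed.

Definition mixed_base (n k : nat) (x : fan_elt) : Prop :=
  match x with
  | Rung c _ => k <= c < n
  | Spine c _ => c < k
  end.

Definition mixed_fin_base (n k : nat) (x : fan_elt) : Prop :=
  match x with
  | Rung c i => k <= c < n \/ (c < k /\ i = 0)
  | Spine c _ => c < k
  end.

Lemma mixed_base_maximal n k : k <= n -> maximal_in (fan_indep n) (mixed_base n k).
Proof.
  intros Hkn. split; [split; [| split] |].
  - intros [c i | c m] Hx; simpl in *; lia.
  - intros c i j Hij Hi _. exists i. simpl in *. split; lia.
  - intros c i Hi. exists i. simpl in *. split; lia.
  - intros Y [Hcop [Hfin Hinf]] HBY [c i | c m] Hx; simpl.
    + pose proof (Hcop _ Hx) as Hc. simpl in Hc.
      destruct (le_lt_dec k c); [lia | exfalso].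
      apply (rung_no_ray Y c i Hinf Hx). intros j _. apply HBY. simpl. lia.
    + pose proof (Hcop _ Hx) as Hc. simpl in Hc.
      destruct (lt_dec c k) as [| Hck]; [assumption | exfalso].
      assert (Hrung : forall j, Y (Rung c j)) by (intros j; apply HBY; simpl; lia).
      pose proof (rungs_joined_eq Y c m (S m) Hfin (Hrung m) (Hrung (S m))
                    (spine_path_one _ _ _ Hx)).
      lia.
Qed.

Lemma mixed_fin_base_maximal n k :
  k <= n -> maximal_in (fin_indep (fan_indep n)) (mixed_fin_base n k).
Proof.
  intros Hkn. split.
  - apply fin_indep_fan. split.
    + intros [c i | c m] Hx; simpl in *; lia.
    + intros c i j Hij Hi Hj. exists i. simpl in *. split; lia.
  - intros G HG HFG [c i | c m] Hx; apply fin_indep_fan in HG; destruct HG as [Hcop Hfin];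
      pose proof (Hcop _ Hx) as Hc; simpl in Hc |- *.
    + destruct (le_lt_dec k c) as [Hkc | Hck]; [left; lia | right; split; [exact Hck |]].
      symmetry. apply (rungs_joined_eq G c 0 i Hfin); [apply HFG; simpl; lia | exact Hx |].
      intros j _. apply HFG. exact Hck.
    + destruct (lt_dec c k) as [| Hck]; [assumption | exfalso].
      assert (Hrung : forall j, G (Rung c j)) by (intros j; apply HFG; simpl; lia).
      pose proof (rungs_joined_eq G c m (S m) Hfin (Hrung m) (Hrung (S m))
                    (spine_path_one _ _ _ Hx)).
      lia.
Qed.

Lemma mixed_base_sub n k : subset (mixed_base n k) (mixed_fin_base n k).
Proof. intros [c i | c m] Hx; simpl in *; [left |]; exact Hx. Qed.

Lemma mixed_bases_diff_card n k : has_card (setminus (mixed_fin_base n k) (mixed_base n k)) k.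
Proof.
  exists (map (fun c => Rung c 0) (seq 0 k)). split; [| split].
  - apply Injective_map_NoDup; [intros a b H; injection H; easy | apply seq_NoDup].
  - rewrite length_map, length_seq. reflexivity.
  - intros x. rewrite in_map_iff. unfold setminus. split.
    + destruct x as [c i | c m]; simpl; [| tauto].
      intros [[Hc | [Hc ->]] Hn]; [contradiction |].
      exists c. split; [reflexivity | apply in_seq; lia].
    + intros [c [<- Hc]]. apply in_seq in Hc. simpl.
      split; [right; split; [lia | reflexivity] | lia].
Qed.

Lemma spec_fan n v : spec (fan_indep n) v <-> exists k, k <= n /\ v = Some k.
Proof.
  split.
  - intros [F [B [HF [HB [HBF Hv]]]]].
    destruct (extra_elements_listed n F B HF HB HBF) as [l' [Hlen Hl']].
    destruct v as [k |]; [exists k; split; [| reflexivity] | exfalso].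
    + destruct Hv as [l [Hnd [<- Hl]]].
      enough (length l <= length l') by lia.
      apply NoDup_incl_length; [exact Hnd |]. intros x Hx. apply Hl', Hl, Hx.
    + apply Hv. exists l'. exact Hl'.
  - intros [k [Hkn ->]]. exists (mixed_fin_base n k), (mixed_base n k).
    split; [exact (mixed_fin_base_maximal n k Hkn) |].
    split; [exact (mixed_base_maximal n k Hkn) |].
    split; [exact (mixed_base_sub n k) | exact (mixed_bases_diff_card n k)].
Qed.

Theorem theorem3p2p1 :
  forall n : nat, 0 < n ->
  exists (E : Type) (L : (E -> Prop) -> Prop),
    is_matroid L /\ nearly_finitary L /\
    exists s : list (option nat),
      NoDup s /\ n <= length s /\ (forall v, spec L v <-> In v s).
Proof.
  intros n _. exists fan_elt, (fan_indep n).
  split; [exact (fan_matroid n) | split; [exact (fan_nearly_finitary n) |]].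
  exists (map Some (seq 0 (S n))). split; [| split].
  - apply Injective_map_NoDup; [intros a b H; injection H; easy | apply seq_NoDup].
  - rewrite length_map, length_seq. lia.
  - intros v. rewrite spec_fan, in_map_iff. split.
    + intros [k [Hk ->]]. exists k. split; [reflexivity | apply in_seq; lia].
    + intros [k [<- Hk]]. apply in_seq in Hk. exists k. split; [lia | reflexivity].
Qed.
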